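(* Let $F$ be an Archimedean vector lattice endowed with the uniform convergence and let $E$ be a majorizing sublattice of $F$. Then every $f\in\overline{E}^{1}_{+}$ is the uniform limit (and the supremum) of an increasing sequence in $E\cap[0_F,f]$; consequently $\overline{E}^{1}_{+}$ consists exactly of the uniform limits of increasing sequences in $E_+$. Moreover, $E$ is super order dense in $\overline{E}$, i.e. for every $f\in\overline{E}_{+}$ there is a countable $G\subset E$ with $f=\bigvee G$ (supremum in $\overline E$).
   Context: For $e\in F_+$, $F_e=\bigcup_{\lambda\ge0}\lambda[-e,e]$ with norm $\|f\|_e=\inf\{\lambda\ge0:|f|\le\lambda e\}$. A net $(f_\alpha)$ converges uniformly to $f$ if there is $e\in F_+$ with $f\in F_e$ and, for every $\varepsilon>0$, eventually $\|f_\alpha-f\|_e\le\varepsilon$. $\overline{E}^1$ (adherence) is the set of uniform limits of nets in $E$; a set is closed if it equals its adherence; $\overline E$ is the intersection of all closed sets containing $E$; for a set $A$, $A_+=A\cap F_+$. A sublattice $E$ is majorizing if for every $f\in F_+$ there is $e\in E$ with $f\le e$. *)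

From mathcomp Require Import all_boot all_order all_algebra.
From mathcomp Require Import boolp classical_sets cardinality reals.
Set Implicit Arguments. Unset Strict Implicit. Unset Printing Implicit Defensive.
Import Order.TTheory GRing.Theory Num.Theory.
Local Open Scope classical_set_scope.
Local Open Scope ring_scope.

Record vector_lattice (R : realType) (F : lmodType R) := VectorLattice {
  vle : F -> F -> Prop;
  vjoin : F -> F -> F;
  vmeet : F -> F -> F;
  vle_refl : forall x, vle x x;
  vle_anti : forall x y, vle x y -> vle y x -> x = y;
  vle_trans : forall x y z, vle x y -> vle y z -> vle x z;
  vjoin_ubl : forall x y, vle x (vjoin x y);
  vjoin_ubr : forall x y, vle y (vjoin x y);
  vjoin_least : forall x y z, vle x z -> vle y z -> vle (vjoin x y) z;
  vmeet_lbl : forall x y, vle (vmeet x y) x;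
  vmeet_lbr : forall x y, vle (vmeet x y) y;
  vmeet_greatest : forall x y z, vle z x -> vle z y -> vle z (vmeet x y);
  vle_add : forall x y z, vle x y -> vle (x + z) (y + z);
  vle_scale : forall (a : R) x, 0 <= a -> vle 0 x -> vle 0 (a *: x)
}.

Section VL.
Variables (R : realType) (F : lmodType R) (L : vector_lattice F).

Local Notation "x <=v y" := (vle L x y) (at level 70).

Definition vabs (f : F) : F := vjoin L f (- f).

Definition archimedean_vl : Prop :=
  forall x y : F, 0 <=v x -> (forall n : nat, x *+ n <=v y) -> x = 0.

Definition pos_part (A : set F) : set F := A `&` [set f | 0 <=v f].

Definition principal_ideal (e : F) : set F :=
  [set f | exists2 l : R, 0 <= l & vabs f <=v l *: e].

(* ||g||_e <= eps, where ||g||_e = inf {l >= 0 : |g| <= l e}.  Since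
   e >= 0, the set {l >= 0 : |g| <= l e} is upward closed, so its infimum
   is <= eps (in particular the set is nonempty) iff it contains every
   l > eps. *)
Definition enorm_le (e g : F) (eps : R) : Prop :=
  forall l : R, eps < l -> vabs g <=v l *: e.

Definition directed (I : Type) (le : I -> I -> Prop) : Prop :=
  [/\ (exists i : I, True), (forall i, le i i),
      (forall i j k, le i j -> le j k -> le i k)
    & (forall i j, exists k, le i k /\ le j k)].

Definition uconv (I : Type) (le : I -> I -> Prop) (x : I -> F) (f : F) : Prop :=
  exists e : F, [/\ 0 <=v e, principal_ideal e f &
    forall eps : R, 0 < eps ->
      exists i0 : I, forall i, le i0 i -> enorm_le e (x i - f) eps].

Definition uconv_seq (u : nat -> F) (f : F) : Prop :=
  uconv (fun m n : nat => (m <= n)%N) u f.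

Definition adherence (E : set F) : set F :=
  [set f | exists (I : Type) (le : I -> I -> Prop) (x : I -> F),
      [/\ directed le, (forall i, E (x i)) & uconv le x f]].

Definition uclosed (A : set F) : Prop := adherence A = A.

Definition uclosure (E : set F) : set F :=
  [set f | forall C : set F, E `<=` C -> uclosed C -> C f].

Definition vector_sublattice (E : set F) : Prop :=
  [/\ E 0, (forall x y, E x -> E y -> E (x + y)),
      (forall (a : R) x, E x -> E (a *: x)),
      (forall x y, E x -> E y -> E (vmeet L x y))
    & (forall x y, E x -> E y -> E (vjoin L x y))].

Definition majorizing (E : set F) : Prop :=
  forall f : F, 0 <=v f -> exists2 e, E e & f <=v e.

Definition is_sup_in (A G : set F) (f : F) : Prop :=
  [/\ A f, (forall g, G g -> g <=v f)
    & (forall h, A h -> (forall g, G g -> g <=v h) -> f <=v h)].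

Definition increasing_seq (u : nat -> F) : Prop := forall n, u n <=v u n.+1.

End VL.

From mathcomp Require Import all_boot all_order all_algebra.
From mathcomp Require Import boolp classical_sets cardinality reals.
Import Order.TTheory GRing.Theory Num.Theory.
Local Open Scope classical_set_scope.
Local Open Scope ring_scope.

(* A uniformly convergent net x in E with limit f >= 0 has a subsequence with
   |x_n - f| <= e/(n+1), where the regulator e can be taken in E because E is
   majorizing.  Then y_n = (x_n - e/(n+1)) v 0 lies in E, 0 <= y_n <= f and
   f <= y_n + 2e/(n+1); the running joins y_0 v ... v y_n therefore increase to
   f uniformly, and the Archimedean property makes f their supremum.  The same
   shift by e/(n+1) shows that the suprema of countable subsets of E form a
   uniformly closed set; it contains E, hence the closure of E. *)

Definition vanishing {K : numDomainType} (c : nat -> K) : Prop :=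
  forall eps : K, 0 < eps -> exists N, forall n, (N <= n)%N -> c n <= eps.

Lemma vanishing_divn {K : archiRealFieldType} [k : K] :
  0 <= k -> vanishing (fun n => k / n.+1%:R).
Proof.
move=> k_ge0 eps eps_gt0; exists (Num.Def.archi_bound (k / eps)) => n le_Nn.
have := archi_boundP (divr_ge0 k_ge0 (ltW eps_gt0)).
rewrite ltr_pdivrMr // ler_pdivrMr ?ltr0n // => /ltW /le_trans; apply.
by rewrite mulrC ler_pM2l // ler_nat (leq_trans le_Nn).
Qed.

Section VectorLatticeTheory.
Context {R : realType} {F : lmodType R} {L : vector_lattice F}.
Local Notation "x <=v y" := (vle L x y) (at level 70).

Lemma vle_addl [x y] z : x <=v y -> z + x <=v z + y.
Proof. by rewrite ![z + _]addrC; apply: vle_add. Qed.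

Lemma vle_add2 [x y z w] : x <=v y -> z <=v w -> x + z <=v y + w.
Proof. by move=> le_xy le_zw; apply: vle_trans (vle_add _ le_xy) (vle_addl _ le_zw). Qed.

Lemma subr_vge0 x y : (0 <=v y - x) <-> (x <=v y).
Proof.
split=> h; first by have := vle_add x h; rewrite add0r subrK.
by have := vle_add (- x) h; rewrite subrr.
Qed.

Lemma vle_scaler [a : R] [x y] : 0 <= a -> x <=v y -> a *: x <=v a *: y.
Proof.
by move=> a_ge0 /subr_vge0 h; apply/subr_vge0; rewrite -scalerBr; apply: vle_scale.
Qed.

Lemma vle_scalel [a b : R] [e] : a <= b -> 0 <=v e -> a *: e <=v b *: e.
Proof.
move=> le_ab e_ge0; apply/subr_vge0; rewrite -scalerBl.
by apply: vle_scale; rewrite ?subr_ge0.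
Qed.

Lemma vle_abs x : x <=v vabs L x.
Proof. exact: vjoin_ubl. Qed.

Lemma vle_abs_opp x : - x <=v vabs L x.
Proof. exact: vjoin_ubr. Qed.

Lemma vabs_ge0 x : 0 <=v vabs L x.
Proof.
have := vle_add2 (vle_abs x) (vle_abs_opp x); rewrite subrr -mulr2n -scaler_nat => h.
have half_ge0 : (0 : R) <= 2^-1 by rewrite invr_ge0.
have := vle_scale half_ge0 h.
by rewrite scalerA mulVf ?pnatr_eq0 // scale1r.
Qed.

Lemma vabs_le [x c] : x <=v c -> - x <=v c -> vabs L x <=v c.
Proof. exact: vjoin_least. Qed.

Lemma vabs_subr_le [x f c] : vabs L (x - f) <=v c -> x <=v f + c /\ f <=v x + c.
Proof.
move=> le_c; split.
  by have := vle_add f (vle_trans (vle_abs _) le_c); rewrite subrK addrC.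
by have := vle_add x (vle_trans (vle_abs_opp _) le_c); rewrite opprB subrK addrC.
Qed.

Hypothesis arch : archimedean_vl L.

Lemma vle_addgt0_scale [x y e] :
  0 <=v e -> (forall eps : R, 0 < eps -> x <=v y + eps *: e) -> x <=v y.
Proof.
move=> e_ge0 le_xy; set p := vjoin L (x - y) 0.
(* all multiples of p lie below e, so p = 0 *)
have le_p eps : 0 < eps -> p <=v eps *: e.
  move=> eps_gt0; apply: vjoin_least; last exact: vle_scale (ltW eps_gt0) e_ge0.
  by have := vle_add (- y) (le_xy _ eps_gt0); rewrite addrAC subrr add0r.
have p0 : p = 0.
  apply: (arch _ e (vjoin_ubr L _ _)) => -[|n]; first by rewrite mulr0n.
  have n_gt0 : (0 : R) < n.+1%:R by rewrite ltr0n.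
  have inv_gt0 : (0 : R) < n.+1%:R^-1 by rewrite invr_gt0.
  have := vle_scaler (ltW n_gt0) (le_p _ inv_gt0).
  by rewrite scaler_nat scalerA divff ?scale1r ?gt_eqF.
apply/subr_vge0; have := vle_add (y - x) (vjoin_ubl L (x - y) 0).
by rewrite -/p p0 add0r addrC subrKA subrr.
Qed.

Lemma vle_add_vanishing [x y e] [c : nat -> R] :
  0 <=v e -> vanishing c -> (forall n, x <=v y + c n *: e) -> x <=v y.
Proof.
move=> e_ge0 c0 le_xy; apply: (vle_addgt0_scale e_ge0) => eps /c0 [N le_c].
exact: vle_trans (le_xy N) (vle_addl _ (vle_scalel (le_c N (leqnn N)) e_ge0)).
Qed.

Lemma directed_leq : directed (fun m n : nat => (m <= n)%N).
Proof.
split=> [|//|m n p|m n]; first by exists 0%N.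
  exact: leq_trans.
by exists (maxn m n); rewrite leq_maxl leq_maxr.
Qed.

Lemma uconv_regulator [I : Type] [le : I -> I -> Prop] [x : I -> F] [f : F] :
  directed le -> uconv L le x f ->
  exists e, [/\ 0 <=v e, principal_ideal L e f &
    forall eps : R, 0 < eps -> exists i, vabs L (x i - f) <=v eps *: e].
Proof.
move=> [_ le_refl _ _] [e [e_ge0 f_in conv]]; exists e; split=> // eps eps_gt0.
have [i near_i] := conv _ (divr_gt0 eps_gt0 (ltr0n _ 2)).
by exists i; apply: near_i (le_refl i) _ _; rewrite ltr_pdivrMr // ltr_pMr // ltr1n.
Qed.

Lemma uconv_ge0 [I : Type] [le : I -> I -> Prop] [x : I -> F] [f : F] :
  directed le -> (forall i, 0 <=v x i) -> uconv L le x f -> 0 <=v f.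
Proof.
move=> dir x_ge0 /(uconv_regulator dir) [e [e_ge0 _ near]].
apply: (vle_addgt0_scale e_ge0) => eps /near [i /vabs_subr_le [le_xf _]].
exact: vle_trans (x_ge0 i) le_xf.
Qed.

Lemma sub_adherence (A : set F) : A `<=` adherence L A.
Proof.
move=> f Af; exists unit, (fun _ _ => True), (fun _ => f); split=> //.
exists (vabs L f); split; first exact: vabs_ge0.
  by exists 1 => //; rewrite scale1r; apply: vle_refl.
move=> eps eps_gt0; exists tt => _ _ l lt_eps_l.
rewrite subrr; apply: vabs_le; rewrite ?oppr0;
  by apply: vle_scale (vabs_ge0 f); apply: ltW (lt_trans eps_gt0 lt_eps_l).
Qed.

Lemma seq_adherence [A : set F] [u : nat -> F] [f : F] :
  (forall n, A (u n)) -> uconv_seq L u f -> adherence L A f.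
Proof.
by move=> Au conv; exists nat, (fun m n => (m <= n)%N), u; split=> //; apply: directed_leq.
Qed.

Section LowerApproximation.
Variables (u : nat -> F) (f e : F) (c : nat -> R).
Hypotheses (e_ge0 : 0 <=v e) (c_vanishing : vanishing c).
Hypotheses (u_le : forall n, u n <=v f) (le_u_add : forall n, f <=v u n + c n *: e).

Lemma uconv_seq_lower_approx : principal_ideal L e f -> uconv_seq L u f.
Proof.
move=> f_in; exists e; split=> // eps /[dup] eps_gt0 /c_vanishing [N le_c].
exists N => n le_Nn l lt_eps_l; have l_gt0 := lt_trans eps_gt0 lt_eps_l.
apply: vabs_le.
  apply: vle_trans (vle_scale (ltW l_gt0) e_ge0).
  by have := vle_add (- f) (u_le n); rewrite subrr.
have le_cl : c n <= l := ltW (le_lt_trans (le_c n le_Nn) lt_eps_l).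
rewrite opprB; apply: vle_trans (vle_scalel le_cl e_ge0).
by have := vle_add (- u n) (le_u_add n); rewrite addrAC subrr add0r.
Qed.

Lemma is_sup_lower_approx : is_sup_in L setT (range u) f.
Proof.
split=> // [_ [n _ <-]|h _ h_ub]; first exact: u_le.
apply: vle_add_vanishing e_ge0 c_vanishing _ => n.
apply: vle_trans (le_u_add n) (vle_add _ _).
by apply: h_ub; exists n.
Qed.

End LowerApproximation.

Fixpoint partial_join (y : nat -> F) (n : nat) : F :=
  if n is m.+1 then vjoin L (partial_join y m) (y n) else y 0%N.

Lemma partial_join_incr (y : nat -> F) : increasing_seq L (partial_join y).
Proof. by move=> n; apply: vjoin_ubl. Qed.

Lemma le_partial_join (y : nat -> F) n : y n <=v partial_join y n.
Proof. by case: n => [|n]; [apply: vle_refl | apply: vjoin_ubr]. Qed.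

Lemma partial_join_le [y : nat -> F] [b : F] :
  (forall n, y n <=v b) -> forall n, partial_join y n <=v b.
Proof. by move=> y_le; elim=> [|n IHn] //=; apply: vjoin_least. Qed.

Lemma partial_join_in [A : set F] [y : nat -> F] :
  (forall a b, A a -> A b -> A (vjoin L a b)) -> (forall n, A (y n)) ->
  forall n, A (partial_join y n).
Proof. by move=> A_join Ay; elim=> [|n IHn] //=; apply: A_join. Qed.

Context {E : set F}.
Hypotheses (subE : vector_sublattice L E) (majE : majorizing L E).

Lemma sublattice_subr_scale [x e : F] (a : R) : E x -> E e -> E (x - a *: e).
Proof.
have [_ E_add E_scale _ _] := subE.
by move=> Ex Ee; apply: E_add Ex _; rewrite -scaleNr; apply: E_scale.
Qed.

(* Enlarging the regulator into E keeps the shifts x - a e inside E. *)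
Lemma uconv_fast_subseq [I : Type] [le : I -> I -> Prop] [x : I -> F] [f : F] :
  directed le -> uconv L le x f ->
  exists e (i : nat -> I), [/\ E e, 0 <=v e, principal_ideal L e f &
    forall n, vabs L (x (i n) - f) <=v n.+1%:R^-1 *: e].
Proof.
move=> dir /(uconv_regulator dir) [e0 [e0_ge0 [l l_ge0 f_le] near]].
have [e Ee le_e0e] := majE _ e0_ge0.
have e_ge0 := vle_trans e0_ge0 le_e0e.
have /choice [i near_i] n : exists i, vabs L (x i - f) <=v n.+1%:R^-1 *: e.
  have [|i le_i] := near (n.+1%:R^-1); first by rewrite invr_gt0.
  by exists i; apply: vle_trans le_i (vle_scaler _ le_e0e); rewrite invr_ge0.
exists e, i; split=> //; exists l => //.
exact: vle_trans f_le (vle_scaler l_ge0 le_e0e).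
Qed.

Lemma adherence_lower_approx f : pos_part L (adherence L E) f ->
  exists e (y : nat -> F), [/\ 0 <=v e, principal_ideal L e f,
    forall n, [/\ E (y n), 0 <=v y n & y n <=v f] &
    forall n, f <=v y n + (2 / n.+1%:R) *: e].
Proof.
move=> [[I [le [x [dir Ex conv]]]] f_ge0].
have [e [i [Ee e_ge0 f_in near_i]]] := uconv_fast_subseq dir conv.
have [_ _ _ _ E_join] := subE.
pose y n := vjoin L (x (i n) - n.+1%:R^-1 *: e) 0.
exists e, y; split=> // n; have [x_le le_x] := vabs_subr_le (near_i n).
  split; [|exact: vjoin_ubr|].
  - by apply: E_join; [apply: sublattice_subr_scale | have [] := subE].
  - apply: vjoin_least f_ge0.
    by have := vle_add (- (n.+1%:R^-1 *: e)) x_le; rewrite addrK.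
rewrite mulr_natl mulr2n scalerDl addrA; apply: vle_trans le_x (vle_add _ _).
have := vle_add (n.+1%:R^-1 *: e) (vjoin_ubl L (x (i n) - n.+1%:R^-1 *: e) 0).
by rewrite subrK.
Qed.

Lemma adherence_pos_increasing_approx f : pos_part L (adherence L E) f ->
  exists u : nat -> F,
    [/\ (forall n, [/\ E (u n), 0 <=v u n & u n <=v f]), increasing_seq L u,
        uconv_seq L u f & is_sup_in L setT (range u) f].
Proof.
move=> /adherence_lower_approx [e [y [e_ge0 f_in y_approx le_y_add]]].
have c_vanishing := vanishing_divn (ler0n R 2).
have u_le : forall n, partial_join y n <=v f.
  by apply: partial_join_le => n; have [] := y_approx n.
have le_u_add n : f <=v partial_join y n + (2 / n.+1%:R) *: e.
  exact: vle_trans (le_y_add n) (vle_add _ (le_partial_join y n)).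
exists (partial_join y); split.
- move=> n; split=> //.
    by apply: partial_join_in => [|m]; [have [] := subE | have [] := y_approx m].
  by have [_ y_ge0 _] := y_approx n; apply: vle_trans y_ge0 (le_partial_join y n).
- exact: partial_join_incr.
- exact: uconv_seq_lower_approx e_ge0 c_vanishing u_le le_u_add f_in.
- exact: is_sup_lower_approx e_ge0 c_vanishing u_le le_u_add.
Qed.

Definition countable_sups (A : set F) : set F :=
  [set f | exists G, [/\ countable G, G `<=` A & is_sup_in L setT G f]].

Lemma is_sup_in_set1 [A : set F] [g : F] : A g -> is_sup_in L A [set g] g.
Proof. by move=> Ag; split=> // [_ ->|h _]; [apply: vle_refl | apply]. Qed.

Lemma sub_countable_sups (A : set F) : A `<=` countable_sups A.
Proof. by move=> g Ag; exists [set g]; split=> // [_ ->//|]; apply: is_sup_in_set1. Qed.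

Lemma is_sup_in_sub [A B G : set F] [f : F] :
  A `<=` B -> A f -> is_sup_in L B G f -> is_sup_in L A G f.
Proof. by move=> AB Af [_ G_le f_least]; split=> // h /AB; apply: f_least. Qed.

Lemma adherence_countable_sups :
  adherence L (countable_sups E) `<=` countable_sups E.
Proof.
move=> f [I [le [x [dir Sx conv]]]].
have [e [i [Ee e_ge0 _ near_i]]] := uconv_fast_subseq dir conv.
have /choice [G G_sup] := fun n => Sx (i n).
pose shift n g := g - n.+1%:R^-1 *: e.
exists (\bigcup_(n in setT) shift n @` G n); split.
- apply: bigcup_countable => // n _; apply: sub_countable (card_image_le _ _) _.
  by have [] := G_sup n.
- move=> _ [n _ [g Gg <-]]; have [_ GE _] := G_sup n.
  exact: sublattice_subr_scale (GE _ Gg) Ee.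
split=> // [_ [n _ [g Gg <-]]|h _ h_ub].
  have [_ _ [_ g_le _]] := G_sup n; have [x_le _] := vabs_subr_le (near_i n).
  by have := vle_add (- (n.+1%:R^-1 *: e)) (vle_trans (g_le _ Gg) x_le); rewrite addrK.
apply: (vle_add_vanishing e_ge0 (vanishing_divn (ler0n R 2))) => n.
have [_ _ [_ _ x_least]] := G_sup n; have [_ le_x] := vabs_subr_le (near_i n).
have x_le : x (i n) <=v h + n.+1%:R^-1 *: e.
  apply: x_least => // g Gg; have := vle_add (n.+1%:R^-1 *: e) (h_ub (shift n g) _).
  by rewrite subrK; apply; exists n => //; exists g.
rewrite mulr_natl mulr2n scalerDl addrA.
exact: vle_trans le_x (vle_add _ x_le).
Qed.

Lemma uclosure_sub_countable_sups : uclosure L E `<=` countable_sups E.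
Proof.
move=> f; apply; first exact: sub_countable_sups.
by apply/seteqP; split; [apply: adherence_countable_sups | apply: sub_adherence].
Qed.

End VectorLatticeTheory.

Theorem proposition11p3 (R : realType) (F : lmodType R)
    (L : vector_lattice F) (E : set F) :
  archimedean_vl L -> vector_sublattice L E -> majorizing L E ->
  [/\ (forall f, pos_part L (adherence L E) f ->
         exists u : nat -> F,
           [/\ (forall n, [/\ E (u n), vle L 0 (u n) & vle L (u n) f]),
               increasing_seq L u, uconv_seq L u f
             & is_sup_in L setT (range u) f]),
      (forall f, pos_part L (adherence L E) f <->
         exists u : nat -> F,
           [/\ (forall n, pos_part L E (u n)), increasing_seq L u
             & uconv_seq L u f])
    & (forall f, pos_part L (uclosure L E) f ->
         exists G : set F,
           [/\ countable G, G `<=` E & is_sup_in L (uclosure L E) G f])].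
Proof.
move=> arch subE majE.
have approx := adherence_pos_increasing_approx arch subE majE.
split=> // f; last first.
  move=> [Cf _].
  have [G [G_countable GE G_sup]] := uclosure_sub_countable_sups arch subE majE _ Cf.
  by exists G; split=> //; apply: is_sup_in_sub G_sup.
split=> [/approx [u [u_approx u_incr conv _]]|[u [Eu u_incr conv]]].
  by exists u; split=> // n; have [] := u_approx n.
split; first by apply: seq_adherence conv => n; have [] := Eu n.
by apply: (uconv_ge0 arch directed_leq _ conv) => n; have [] := Eu n.
Qed.
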